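(* Let $R$ be a unital, non-associative ring, let $\sigma,\delta\colon R\to R$ be left $R$-additive maps, and consider the non-associative Ore extension $R[X;\sigma,\delta]$. Let $\alpha$ be a ring endomorphism of $R$ such that there exists $a\in R$ with $\alpha(a)=1$. Then the homogeneous extension of $\alpha$ to $R[X;\sigma,\delta]$ is a ring endomorphism if and only if $\alpha\circ\delta=\delta\circ\alpha$ and $\alpha\circ\sigma=\sigma\circ\alpha$.
   Context: ''Non-associative'' means not necessarily associative. $\mathbb{N}$ denotes the non-negative integers. A map $\beta\colon R\to R$ is left $R$-additive if $r\cdot\beta(s+t)=r\cdot(\beta(s)+\beta(t))$ for all $r,s,t\in R$. For $m\in\mathbb{N}$ and $0\le i\le m$, $\pi_i^m\colon R\to R$ denotes the sum of all $\binom{m}{i}$ compositions of $i$ copies of $\sigma$ and $m-i$ copies of $\delta$ in arbitrary order ($\pi_0^0=\mathrm{id}_R$), and $\pi_i^m:=0$ if $i<0$ or $i>m$. The non-associative Ore extension $R[X;\sigma,\delta]$ is the set of formal sums $\sum_{i\in\mathbb{N}}a_iX^i$ with $a_i\in R$, finitely many nonzero, with coefficientwise addition and the distributive multiplication determined by $aX^m\cdot bX^n=\sum_{i\in\mathbb{N}}(a\cdot\pi_i^m(b))X^{i+n}$. An additive map $\gamma\colon R\to R$ is extended homogeneously by $\gamma\left(\sum_i a_iX^i\right):=\sum_i\gamma(a_i)X^i$. *)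

From HB Require Import structures.
From mathcomp Require Import all_boot all_order all_algebra.
Set Implicit Arguments. Unset Strict Implicit. Unset Printing Implicit Defensive.
Import GRing.Theory.
Local Open Scope ring_scope.

Definition nonassoc_ring (R : zmodType) (mul : R -> R -> R) (one : R) : Prop :=
  [/\ (forall x y z, mul (x + y) z = mul x z + mul y z),
      (forall x y z, mul x (y + z) = mul x y + mul x z),
      (forall x, mul one x = x) &
      (forall x, mul x one = x)].

Definition left_additive (R : zmodType) (mul : R -> R -> R) (b : R -> R) : Prop :=
  forall r s t, mul r (b (s + t)) = mul r (b s + b t).

Definition ring_endo (R : zmodType) (mul : R -> R -> R) (f : R -> R) : Prop :=
  (forall x y, f (x + y) = f x + f y) /\ (forall x y, f (mul x y) = mul (f x) (f y)).

(* pi_i^m: sum over all words of length m with i letters sigma (true) and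
   m - i letters delta (false) of the corresponding composition.  The word
   [w1; ...; wm] gives f_{w1} o ... o f_{wm}.  Empty sum (= 0) when i > m. *)
Definition ore_pi (R : zmodType) (sigma delta : R -> R) (m i : nat) (x : R) : R :=
  \sum_(w : m.-tuple bool | count id w == i)
     (foldr (fun (b : bool) f => (if b then sigma else delta) \o f) id w) x.

(* Elements of R[X; sigma, delta] are represented by coefficient lists
   p = [:: a_0; a_1; ...] (p`_i = coefficient of X^i); two lists are equal as
   elements iff all coefficients agree (trailing zeros irrelevant). *)
Definition ore_eq (R : zmodType) (p q : seq R) : Prop := forall i, p`_i = q`_i.

Definition ore_add (R : zmodType) (p q : seq R) : seq R :=
  mkseq (fun i => p`_i + q`_i) (maxn (size p) (size q)).

(* coefficient of X^l in p * q, where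
   a X^m * b X^n = sum_k (a * pi_k^m(b)) X^(k+n) *)
Definition ore_mul_coef (R : zmodType) (mul : R -> R -> R) (sigma delta : R -> R)
    (p q : seq R) (l : nat) : R :=
  \sum_(i < size p) \sum_(j < size q) \sum_(k < i.+1 | (k + j)%N == l)
      mul p`_i (ore_pi sigma delta i k q`_j).

Definition ore_mul (R : zmodType) (mul : R -> R -> R) (sigma delta : R -> R)
    (p q : seq R) : seq R :=
  mkseq (ore_mul_coef mul sigma delta p q) (size p + size q).

Definition hom_ext (R : zmodType) (gamma : R -> R) (p : seq R) : seq R := map gamma p.

Definition ore_ring_endo (R : zmodType) (mul : R -> R -> R) (sigma delta : R -> R)
    (g : seq R -> seq R) : Prop :=
  (forall p q, ore_eq (g (ore_add p q)) (ore_add (g p) (g q))) /\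
  (forall p q, ore_eq (g (ore_mul mul sigma delta p q))
                      (ore_mul mul sigma delta (g p) (g q))).

From HB Require Import structures.
From mathcomp Require Import all_boot all_order all_algebra.
Import GRing.Theory.
Local Open Scope ring_scope.

(* If alpha commutes with sigma and delta it commutes with every pi_i^m, so the
   coefficientwise formula for the product is carried over by alpha term by
   term.  Conversely, comparing alpha(X * b) = X * alpha(b) in degrees 0 and 1
   yields alpha(delta b) = delta(alpha b) and alpha(sigma b) = sigma(alpha b);
   here alpha(1) = 1 holds because 1 is in the image of alpha. *)

Lemma additive_map0 {U V : zmodType} {f : U -> V} :
  {morph f : x y / x + y} -> f 0 = 0.
Proof.
move=> fD; apply: (addrI (f 0)).
by rewrite -fD !addr0.
Qed.

Lemma nth_map_additive {U V : zmodType} {f : U -> V} (p : seq U) i :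
  {morph f : x y / x + y} -> (map f p)`_i = f p`_i.
Proof.
move=> fD; case: (ltnP i (size p)) => [ltip | leip]; first by rewrite (nth_map 0).
by rewrite !nth_default ?size_map // (additive_map0 fD).
Qed.

Lemma ore_pi1 (R : zmodType) (sigma delta : R -> R) k x :
  ore_pi sigma delta 1 k x =
  \sum_(b : bool | (b : nat) == k) (if b then sigma x else delta x).
Proof.
rewrite /ore_pi (reindex (fun b : bool => [tuple b])) /=.
  by apply: eq_big => [b|b _] /=; case: b; rewrite ?addn0.
exists (fun w => thead w) => [b _|w _] /=; first by rewrite theadE.
rewrite [RHS]tuple_eta; apply: val_inj => /=.
by case: w => [[|? []]].
Qed.

Lemma ore_pi1_0 (R : zmodType) (sigma delta : R -> R) x :
  ore_pi sigma delta 1 0 x = delta x.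
Proof. by rewrite ore_pi1 big_mkcond big_bool /= add0r. Qed.

Lemma ore_pi1_1 (R : zmodType) (sigma delta : R -> R) x :
  ore_pi sigma delta 1 1 x = sigma x.
Proof. by rewrite ore_pi1 big_mkcond big_bool /= addr0. Qed.

Section OreExtension.

Variables (R : zmodType) (mul : R -> R -> R) (sigma delta : R -> R).

Lemma ore_mul_coef_X_const (one b : R) l :
  (forall x, mul one x = x) -> (forall x, mul 0 x = 0) ->
  ore_mul_coef mul sigma delta [:: 0; one] [:: b] l =
  if l == 0%N then delta b else if l == 1%N then sigma b else 0.
Proof.
move=> mul1x mul0x; rewrite /ore_mul_coef /=.
rewrite !big_ord_recl !big_ord0 /= big1 ?add0r ?addr0; last by move=> *; rewrite mul0x.
rewrite big_mkcond !big_ord_recl big_ord0 /= !mul1x ore_pi1_0 ore_pi1_1.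
by case: l => [|[|l]] /=; rewrite ?addr0 ?add0r.
Qed.

Variable alpha : R -> R.
Hypothesis alphaD : {morph alpha : x y / x + y}.

Lemma hom_ext_ore_add (p q : seq R) :
  ore_eq (hom_ext alpha (ore_add p q)) (ore_add (hom_ext alpha p) (hom_ext alpha q)).
Proof.
move=> i; rewrite /hom_ext /ore_add !size_map nth_map_additive //.
case: (ltnP i (maxn (size p) (size q))) => [ltin | lein].
  by rewrite !nth_mkseq // alphaD !nth_map_additive.
by rewrite !nth_default ?size_mkseq // (additive_map0 alphaD).
Qed.

Lemma additive_map_sum (I : Type) (r : seq I) (P : pred I) (F : I -> R) :
  alpha (\sum_(i <- r | P i) F i) = \sum_(i <- r | P i) alpha (F i).
Proof. exact: (big_morph alpha alphaD (additive_map0 alphaD)). Qed.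

Hypothesis alphaM : forall x y, alpha (mul x y) = mul (alpha x) (alpha y).
Hypothesis alpha_sigma : forall x, alpha (sigma x) = sigma (alpha x).
Hypothesis alpha_delta : forall x, alpha (delta x) = delta (alpha x).

Lemma ore_pi_commute m k x :
  alpha (ore_pi sigma delta m k x) = ore_pi sigma delta m k (alpha x).
Proof.
rewrite /ore_pi additive_map_sum; apply: eq_bigr => w _.
by elim: (tval w) => [|[] s IHs] //=; rewrite ?alpha_sigma ?alpha_delta IHs.
Qed.

Lemma hom_ext_ore_mul (p q : seq R) :
  ore_eq (hom_ext alpha (ore_mul mul sigma delta p q))
         (ore_mul mul sigma delta (hom_ext alpha p) (hom_ext alpha q)).
Proof.
move=> l; rewrite /hom_ext /ore_mul !size_map nth_map_additive //.
case: (ltnP l (size p + size q)) => [ltl | lel]; last first.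
  by rewrite !nth_default ?size_mkseq // (additive_map0 alphaD).
rewrite !nth_mkseq // /ore_mul_coef !size_map additive_map_sum.
apply: eq_bigr => i _; rewrite additive_map_sum; apply: eq_bigr => j _.
rewrite additive_map_sum; apply: eq_bigr => k _.
by rewrite alphaM ore_pi_commute !nth_map_additive.
Qed.

End OreExtension.

Lemma ore_ring_endo_commute {R : zmodType} {mul : R -> R -> R} {one : R}
    {sigma delta alpha : R -> R} :
  (forall x, mul one x = x) -> (forall x y z, mul (x + y) z = mul x z + mul y z) ->
  {morph alpha : x y / x + y} -> alpha one = one ->
  (forall p q, ore_eq (hom_ext alpha (ore_mul mul sigma delta p q))
     (ore_mul mul sigma delta (hom_ext alpha p) (hom_ext alpha q))) ->
  (forall x, alpha (delta x) = delta (alpha x)) /\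
  (forall x, alpha (sigma x) = sigma (alpha x)).
Proof.
move=> mul1x mulDl alphaD alpha1 homM.
have mul0x x : mul 0 x = 0 by apply: (additive_map0 (f := mul^~ x)) => y z.
have alpha_X_const b l : (l < 2)%N ->
  alpha (ore_mul_coef mul sigma delta [:: 0; one] [:: b] l) =
  ore_mul_coef mul sigma delta [:: 0; one] [:: alpha b] l.
  move=> ltl2; have := homM [:: 0; one] [:: b] l.
  rewrite /hom_ext /ore_mul /= (additive_map0 alphaD) alpha1.
  by case: l ltl2 => [|[|]].
split=> b.
  by have := alpha_X_const b 0%N isT; rewrite !ore_mul_coef_X_const.
by have := alpha_X_const b 1%N isT; rewrite !ore_mul_coef_X_const.
Qed.

Theorem mainTheorem2 (R : zmodType) (mul : R -> R -> R) (one : R)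
    (HR : nonassoc_ring mul one) (sigma delta : R -> R)
    (Hsigma : left_additive mul sigma) (Hdelta : left_additive mul delta)
    (alpha : R -> R) (Halpha : ring_endo mul alpha)
    (Hone : exists a : R, alpha a = one) :
  ore_ring_endo mul sigma delta (hom_ext alpha) <->
  ((forall x, alpha (delta x) = delta (alpha x)) /\
   (forall x, alpha (sigma x) = sigma (alpha x))).
Proof.
case: HR => mulDl _ mul1x mulx1; case: Halpha => alphaD alphaM.
have alpha1 : alpha one = one.
  by case: Hone => a alpha_a; rewrite -[alpha one]mulx1 -{2}alpha_a -alphaM mul1x.
split=> [[_ homM] | [alpha_delta alpha_sigma]].
  exact: (ore_ring_endo_commute mul1x mulDl alphaD alpha1 homM).
split; first exact: hom_ext_ore_add.
exact: hom_ext_ore_mul.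
Qed.
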